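(* Let $S$ be a nonabelian finite simple group, $I$ an infinite set, and $G=S^I$ with the product topology. Then $G$ is not strongly complete, and every normal subgroup $U$ of finite index in $G$ is either open in $G$ or not of profinite type (as an abstract group).
   Context: An abstract group is of profinite type if it admits a topology making it a profinite group. A profinite group is strongly complete if every subgroup of finite index is open. *)

From mathcomp Require Import all_boot all_fingroup all_solvable.
From Stdlib Require List.
Set Implicit Arguments. Unset Strict Implicit. Unset Printing Implicit Defensive.

Definition infinite_type (I : Type) : Prop :=
  ~ exists l : list I, forall i : I, List.In i l.

Section Prod.
Variables (gT : finGroupType) (I : Type).

Definition pmul (f g : I -> gT) : I -> gT := fun i => (f i * g i)%g.
Definition pinv (f : I -> gT) : I -> gT := fun i => ((f i)^-1)%g.
Definition pone : I -> gT := fun _ => 1%g.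

(* product topology on S^I, S discrete: W is open iff every point of W has
   a basic neighbourhood (agreement on a finite set of coordinates) inside W *)
Definition prod_open (W : (I -> gT) -> Prop) : Prop :=
  forall f, W f -> exists F : list I,
    forall g, (forall i, List.In i F -> g i = f i) -> W g.

Definition subgroup (U : (I -> gT) -> Prop) : Prop :=
  [/\ U pone, (forall f g, U f -> U g -> U (pmul f g))
    & (forall f, U f -> U (pinv f))].

Definition normal_subgroup (U : (I -> gT) -> Prop) : Prop :=
  subgroup U /\ forall f g, U f -> U (pmul (pinv g) (pmul f g)).

Definition finite_index (U : (I -> gT) -> Prop) : Prop :=
  exists reps : list (I -> gT),
    forall g, exists r, List.In r reps /\ U (pmul (pinv r) g).

Definition strongly_complete_prod : Prop :=
  forall U, subgroup U -> finite_index U -> prod_open U.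
End Prod.

Section Profinite.
Variables (T : Type) (H : T -> Prop) (mul : T -> T -> T) (inv : T -> T).
Variable O : (T -> Prop) -> Prop.

Definition is_topology_on : Prop :=
  [/\ O H, O (fun _ => False),
      (forall A, O A -> forall x, A x -> H x),
      (forall C : (T -> Prop) -> Prop, (forall A, C A -> O A) ->
          O (fun x => exists A, C A /\ A x))
    & (forall A B, O A -> O B -> O (fun x => A x /\ B x))].

Definition mul_continuous : Prop :=
  forall x y, H x -> H y -> forall W, O W -> W (mul x y) ->
    exists A B, [/\ O A, O B, A x, B y &
      forall a b, A a -> B b -> W (mul a b)].

Definition inv_continuous : Prop :=
  forall x, H x -> forall W, O W -> W (inv x) ->
    exists A, [/\ O A, A x & forall a, A a -> W (inv a)].

Definition compact_on : Prop :=
  forall C : (T -> Prop) -> Prop, (forall A, C A -> O A) ->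
    (forall x, H x -> exists A, C A /\ A x) ->
    exists l : list (T -> Prop), (forall A, List.In A l -> C A) /\
      (forall x, H x -> exists A, List.In A l /\ A x).

Definition hausdorff_on : Prop :=
  forall x y, H x -> H y -> x <> y ->
    exists A B, [/\ O A, O B, A x, B y & forall z, A z -> B z -> False].

Definition connected_on (A : T -> Prop) : Prop :=
  forall V W, O V -> O W -> (forall z, A z -> V z \/ W z) ->
    (forall z, A z -> V z -> W z -> False) ->
    (forall z, A z -> V z) \/ (forall z, A z -> W z).

Definition totally_disconnected_on : Prop :=
  forall A, (forall z, A z -> H z) -> connected_on A ->
    forall x y, A x -> A y -> x = y.

Definition is_profinite_group_on : Prop :=
  [/\ is_topology_on, mul_continuous, inv_continuous, compact_on &
      hausdorff_on /\ totally_disconnected_on].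
End Profinite.

Definition profinite_type (gT : finGroupType) (I : Type)
  (U : (I -> gT) -> Prop) : Prop :=
  exists O, is_profinite_group_on U (@pmul gT I) (@pinv gT I) O.

(* For the first claim, take an ultrafilter u on I containing the cofinite
   sets.  Since S is finite, every f : I -> S is constant on a u-large set, so
   the kernel {f | f i = 1 for u-almost all i} of the resulting homomorphism
   S^I -> S has finite index; it is not open, because a basic neighbourhood of 1
   constrains only finitely many coordinates.

   For the second claim, call a coordinate i full when U contains every element
   supported on {i}.  The values at i of the elements of U supported on {i}
   form a normal subgroup of S; if some w in U has w i <> 1, this subgroup
   contains the nontrivial commutators [w i, t], so i is full by simplicity.
   Hence the elements supported on a single non-full coordinate with a fixed
   nontrivial value lie in pairwise distinct cosets of U, and only finitely many
   coordinates are non-full.  If U is a compact Hausdorff topological group,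
   the sets {f in U | f i <> g i} with i full are open (near each of their
   points the condition is a non-commutation f * a <> b * f), so compactness
   shows that U maps onto the full coordinates.  Commutators [f, h] with h
   supported on full coordinates then put every element supported on full
   coordinates into U, as S is perfect, and U contains the basic neighbourhood
   of 1 that fixes the finitely many non-full coordinates. *)

From mathcomp Require Import all_boot all_fingroup all_solvable.
From mathcomp Require Import boolp filter.
From Stdlib Require List.
Set Implicit Arguments. Unset Strict Implicit. Unset Printing Implicit Defensive.
Local Open Scope group_scope.

Lemma cofinite_ultrafilter (I : Type) : infinite_type I ->
  exists u : (I -> Prop) -> Prop,
    UltraFilter u /\ forall l : list I, u (fun i => ~ List.In i l).
Proof.
move=> infI.
pose cofin A := exists l : list I, forall i, ~ List.In i l -> A i.
have cofinP : ProperFilter cofin.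
  split.
    case=> l Hl; apply: infI; exists l => i.
    by apply: contrapT => /Hl.
  split.
  - by exists nil.
  - move=> A B [l1 H1] [l2 H2]; exists (l1 ++ l2) => i Hi.
    by split; [apply: H1|apply: H2] => H; apply: Hi; apply: List.in_or_app; tauto.
  - by move=> A B AB [l H]; exists l => i /H /AB.
have [u [uU cofin_u]] := ultraFilterLemma cofinP.
by exists u; split=> // l; apply: cofin_u; exists l.
Qed.

Lemma ultrafilter_constant_value (I : Type) (u : (I -> Prop) -> Prop)
    (T : finType) (g : I -> T) :
  UltraFilter u -> exists v, u (fun i => g i = v).
Proof.
move=> uU; apply: contrapT => nov.
have neq v : u (fun i => g i <> v).
  by case: (in_ultra_setVsetC (fun i => g i = v) uU) => // uv; case: nov; exists v.
by have /(_ _)/filter_ex [i /(_ (g i))] := filter_forall _ neq.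
Qed.

Lemma In_of_mem (T : eqType) (x : T) (s : seq T) : x \in s -> List.In x s.
Proof. by elim: s => //= y s IHs; rewrite in_cons => /predU1P [->|/IHs]; [left|right]. Qed.

Section UltrafilterKernel.
Variables (gT : finGroupType) (I : Type) (u : (I -> Prop) -> Prop).
Hypothesis uU : UltraFilter u.

Definition ultra_kernel (f : I -> gT) : Prop := u (fun i => f i = 1).

Lemma ultra_kernel_subgroup : subgroup ultra_kernel.
Proof.
split; first exact: filterS filterT.
- move=> f g uf ug; apply: filterS (filterI uf ug) => i [fi1 gi1].
  by rewrite /pmul fi1 gi1 mulg1.
- by move=> f; apply: filterS => i fi1; rewrite /pinv fi1 invg1.
Qed.

Lemma ultra_kernel_finite_index : finite_index ultra_kernel.
Proof.
exists (map (fun v _ => v) (enum gT)) => g.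
have [v uv] := ultrafilter_constant_value g uU.
exists (fun _ => v); split.
  by apply: List.in_map; apply: In_of_mem; rewrite mem_enum.
by apply: filterS uv => i gi; rewrite /pmul /pinv gi mulVg.
Qed.

Lemma ultra_kernel_not_open (s : gT) :
  s != 1 -> (forall l : list I, u (fun i => ~ List.In i l)) ->
  ~ prod_open ultra_kernel.
Proof.
move=> ns ucofin /(_ (@pone gT I)) [|F FP]; first exact: filterS filterT.
pose g i := if `[< List.In i F >] then 1 else s.
have /(filterI (ucofin F)) : ultra_kernel g.
  by apply: FP => i iF; rewrite /g asboolT.
move=> /filter_ex [i [iF]]; rewrite /g asboolF //.
by move/eqP; rewrite (negbTE ns).
Qed.

End UltrafilterKernel.

Lemma not_strongly_complete_prod (gT : finGroupType) (I : Type) :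
  (exists s : gT, s != 1) -> infinite_type I -> ~ strongly_complete_prod gT I.
Proof.
move=> [s ns] /cofinite_ultrafilter [u [uU ucofin]] SC.
apply: (ultra_kernel_not_open uU ns ucofin).
by apply: SC; [exact: ultra_kernel_subgroup | exact: ultra_kernel_finite_index].
Qed.

Lemma nonabelian_nontrivial (gT : finGroupType) :
  ~~ abelian [set: gT] -> exists s : gT, s != 1.
Proof.
move=> nabS; apply: contrapT => all1; case/negP: nabS.
have x1 (x : gT) : x = 1.
  by apply/eqP; apply: contrapT => nx; apply: all1; exists x; apply/negP.
by apply/centsP => x _ y _; rewrite /commute (x1 x) (x1 y).
Qed.

Section SimpleNonabelian.
Variable gT : finGroupType.
Hypotheses (simS : simple [set: gT]) (nabS : ~~ abelian [set: gT]).

Lemma simple_nonabelian_center : 'Z([set: gT]) = 1.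
Proof.
have /simpleP [_ /(_ _ (center_normal [set: gT]))] := simS.
case=> // ZT; case/negP: nabS; rewrite abelianE -{1}ZT; exact: subsetIr.
Qed.

Lemma simple_nonabelian_perfect : [~: [set: gT], [set: gT]] = [set: gT].
Proof.
have /simpleP [_ /(_ _ (der_normal 1 [set: gT]))] := simS.
case=> // D1; case/negP: nabS; rewrite abelianE; exact/commG1P.
Qed.

Lemma exists_noncommuting (x : gT) : x != 1 -> exists t, [~ x, t] != 1.
Proof.
move=> nx; apply: contrapT => comm; move: nx.
have : x \in 'Z([set: gT]).
  rewrite inE in_setT; apply/centP => t _; apply/commgP.
  by apply: contrapT => nt; apply: comm; exists t; apply/negP.
by rewrite simple_nonabelian_center inE => ->.
Qed.

End SimpleNonabelian.

Lemma finite_of_inj_into_list (I T : Type) (P : I -> Prop) (f : I -> T) (l : list T) :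
  (forall i, P i -> List.In (f i) l) -> (forall i j, P i -> P j -> f i = f j -> i = j) ->
  exists J : list I, forall i, P i -> List.In i J.
Proof.
elim: l P => [|r l IHl] P Pl Pinj; first by exists nil => i /Pl.
have [J PJ] : exists J, forall i, P i /\ f i <> r -> List.In i J.
  apply: IHl; first by move=> i [/Pl [->|//] /(_ erefl)].
  by move=> i j [Pi _] [Pj _]; apply: Pinj.
case: (pselect (exists i0, P i0 /\ f i0 = r)) => [[i0 [Pi0 fi0]]|none].
  exists (i0 :: J) => i Pi; case: (pselect (f i = r)) => [fi|nfi].
    by left; apply: Pinj => //; rewrite fi0 fi.
  by right; apply: PJ.
by exists J => i Pi; apply: PJ; split=> // fi; apply: none; exists i.
Qed.

Section TopologyOn.
Variables (T : Type) (H : T -> Prop) (mul : T -> T -> T) (O : (T -> Prop) -> Prop).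
Hypothesis topO : is_topology_on H O.

Lemma open_of_locally_open (W : T -> Prop) :
  (forall x, W x -> exists D, [/\ O D, D x & forall y, D y -> W y]) -> O W.
Proof.
move=> Wloc; case: topO => _ _ _ Ounion _.
have -> : W = (fun x => exists D, (O D /\ forall y, D y -> W y) /\ D x).
  apply: funext => x; apply: propext; split; last by case=> D [[_ DW] /DW].
  by case/Wloc=> D [OD Dx DW]; exists D.
by apply: Ounion => D [].
Qed.

Lemma open_mul_neq (a b : T) :
  mul_continuous H mul O -> hausdorff_on H O ->
  (forall x y, H x -> H y -> H (mul x y)) -> H a -> H b ->
  O (fun x => H x /\ mul x a <> mul b x).
Proof.
move=> mulc haus Hmul Ha Hb; apply: open_of_locally_open => x [Hx ne].
have [V [W [OV OW Vxa Wbx VW]]] := haus _ _ (Hmul _ _ Hx Ha) (Hmul _ _ Hb Hx) ne.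
have [A [A' [OA _ Ax A'a AV]]] := mulc _ _ Hx Ha _ OV Vxa.
have [B' [B [_ OB B'b Bx BW]]] := mulc _ _ Hb Hx _ OW Wbx.
case: topO => _ _ OH _ Ointer.
exists (fun y => A y /\ B y); split=> //; first exact: Ointer.
move=> y [Ay By]; split; first exact: OH Ay.
by move=> E; apply: (VW (mul y a)); [apply: AV|rewrite E; apply: BW].
Qed.

Lemma compact_on_indexed (J : Type) (A : J -> T -> Prop) :
  compact_on H O -> (forall j, O (A j)) -> (forall x, H x -> exists j, A j x) ->
  exists l : list J, forall x, H x -> exists j, List.In j l /\ A j x.
Proof.
move=> comp OA cover.
case: (comp (fun D => exists j, D = A j)) => [D [j ->]|x /cover [j Ajx]|ls [lsA lscover]];
  [exact: OA | by exists (A j); split=> //; exists j |].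
suff [l lls] : exists l : list J, forall D, List.In D ls -> exists j, List.In j l /\ D = A j.
  exists l => x /lscover [D [Dls Dx]]; have [j [jl DA]] := lls D Dls.
  by exists j; split=> //; rewrite -DA.
elim: ls lsA {lscover} => [|D ls IHls] lsA; first by exists nil.
have [l lls] := IHls (fun D' HD' => lsA D' (or_intror HD')).
have [j ->] := lsA D (or_introl erefl).
exists (j :: l) => D' /= [<-|/lls [k [kl ->]]]; first by exists j; split; [left|].
by exists k; split; [right|].
Qed.

End TopologyOn.

Section ConstOn.
Variables (gT : finGroupType) (I : Type).

Definition const_on (A : I -> Prop) (x : gT) : I -> gT :=
  fun i => if `[< A i >] then x else 1.

Lemma const_on1 A : const_on A 1 = @pone gT I.
Proof. by apply: funext => i; rewrite /const_on; case: ifP. Qed.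

Lemma const_onM A x y : pmul (const_on A x) (const_on A y) = const_on A (x * y).
Proof. by apply: funext => i; rewrite /pmul /const_on; case: ifP; rewrite ?mulg1. Qed.

Lemma const_onV A x : pinv (const_on A x) = const_on A x^-1.
Proof. by apply: funext => i; rewrite /pinv /const_on; case: ifP; rewrite ?invg1. Qed.

End ConstOn.

Section NormalSubgroup.
Variables (gT : finGroupType) (I : Type) (U : (I -> gT) -> Prop).
Hypothesis NU : normal_subgroup U.

Lemma mem_pone : U (@pone gT I).
Proof. by case: NU => [[]]. Qed.

Lemma mem_pmul f g : U f -> U g -> U (pmul f g).
Proof. by case: NU => [[_ UM _] _]; apply: UM. Qed.

Lemma mem_pinv f : U f -> U (pinv f).
Proof. by case: NU => [[_ _ UV] _]; apply: UV. Qed.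

Lemma mem_pconj f g : U f -> U (pmul (pinv g) (pmul f g)).
Proof. by case: NU => _; apply. Qed.

Definition const_on_mem (A : I -> Prop) : {set gT} :=
  [set x | `[< U (const_on A x) >]].

Lemma group_set_const_on_mem A : group_set (const_on_mem A).
Proof.
apply/group_setP; split; first by rewrite inE const_on1; apply/asboolP; exact: mem_pone.
move=> x y; rewrite !inE => /asboolP Ux /asboolP Uy; apply/asboolP.
by rewrite -const_onM; apply: mem_pmul.
Qed.

Canonical const_on_mem_group A := Group (group_set_const_on_mem A).

Lemma const_on_mem_normal A : const_on_mem A <| [set: gT].
Proof.
rewrite /normal subsetT; apply/subsetP => y _; rewrite inE; apply/subsetP => x.
rewrite mem_conjg !inE => /asboolP Ux; apply/asboolP.
have := mem_pconj (const_on A y) Ux.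
by rewrite const_onV !const_onM conjgE invgK !mulgA mulVg mul1g mulgKV.
Qed.

Definition full_at (i : I) : Prop := forall y, U (const_on (eq^~ i) y).

Lemma approx_on_full g l :
  exists f, U f /\ forall i, List.In i l -> full_at i -> f i = g i.
Proof.
elim: l => [|a l [f [Uf fl]]]; first by exists (@pone gT I); split=> //; exact: mem_pone.
case: (pselect (full_at a)) => [fa|nfa]; last first.
  by exists f; split=> // i /= [<- /nfa []|/fl].
exists (pmul (const_on (eq^~ a) (g a * (f a)^-1)) f); split; first exact: mem_pmul (fa _) Uf.
move=> i /= ia fi; rewrite /pmul /const_on; case: (pselect (i = a)) => [->|nia].
  by rewrite asboolT // mulgKV.
by rewrite asboolF // mul1g; case: ia => [ai|/fl]; [case: nia | apply].
Qed.

Lemma mem_of_support (P : I -> Prop) :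
  (forall A s, (forall i, A i -> P i) -> U (const_on A s)) ->
  forall g, (forall i, ~ P i -> g i = 1) -> U g.
Proof.
move=> UP; suff Uvs : forall (vs : seq gT) g, (forall i, ~ P i -> g i = 1) ->
    (forall i, g i = 1 \/ g i \in vs) -> U g.
  by move=> g gP; apply: (Uvs (enum gT)) => // i; right; rewrite mem_enum.
elim=> [|v vs IHvs] g gP gvs.
  suff -> : g = @pone gT I by exact: mem_pone.
  by apply: funext => i; case: (gvs i).
pose A i := P i /\ g i = v.
pose g' i := if `[< A i >] then 1 else g i.
have -> : g = pmul (const_on A v) g'.
  apply: funext => i; rewrite /pmul /const_on /g'.
  by case: ifP => [/asboolP [_ ->]|_]; rewrite ?mulg1 ?mul1g.
apply: mem_pmul; first by apply: UP => i [].
apply: IHvs => i; first by move=> nPi; rewrite /g'; case: ifP => // _; apply: gP.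
rewrite /g'; case: ifP => [_|/asboolP nAi]; first by left.
case: (gvs i) => [|]; first by left.
rewrite in_cons => /predU1P [giv|]; last by right.
by left; apply: gP => Pi; apply: nAi.
Qed.

Hypotheses (simS : simple [set: gT]) (nabS : ~~ abelian [set: gT]).

Lemma const_on_mem_full A x : x != 1 -> U (const_on A x) -> forall y, U (const_on A y).
Proof.
move=> nx Ux y; have /simpleP [_ /(_ _ (const_on_mem_normal A))] := simS.
case=> [/setP /(_ x)|full]; first by rewrite !inE (negbTE nx) asboolT.
have : y \in const_on_mem A by rewrite full inE.
by rewrite inE => /asboolP.
Qed.

Lemma full_at_of_nontrivial w i : U w -> w i != 1 -> full_at i.
Proof.
move=> Uw nwi; have [t nt] := exists_noncommuting simS nabS nwi.
apply: (const_on_mem_full nt).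
pose c := const_on (eq^~ i) t.
suff -> : const_on (eq^~ i) [~ w i, t] = pmul (pinv w) (pmul (pinv c) (pmul w c)).
  exact: mem_pmul (mem_pinv Uw) (mem_pconj _ Uw).
apply: funext => j; rewrite /pmul /pinv /c /const_on; case: ifP => [/asboolP ->|_].
  by rewrite commgEl conjgE.
by rewrite invg1 mul1g mulg1 mulVg.
Qed.

Lemma finite_nonfull : finite_index U ->
  exists J : list I, forall i, ~ full_at i -> List.In i J.
Proof.
case=> reps repsP; have [s ns] := nonabelian_nontrivial nabS.
have /choice [rho rhoP] := fun i => repsP (const_on (eq^~ i) s).
apply: (finite_of_inj_into_list (f := rho) (l := reps)) => [i _|i j nfi _ rhoij].
  by case: (rhoP i).
apply: contrapT => nij; apply: nfi.
pose w := pmul (pinv (const_on (eq^~ i) s)) (const_on (eq^~ j) s).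
have Uw : U w.
  have := mem_pmul (mem_pinv (proj2 (rhoP i))) (proj2 (rhoP j)); rewrite rhoij.
  suff -> : pmul (pinv (pmul (pinv (rho j)) (const_on (eq^~ i) s)))
    (pmul (pinv (rho j)) (const_on (eq^~ j) s)) = w by [].
  by apply: funext => k; rewrite /w /pmul /pinv invMg invgK !mulgA mulgK.
apply: (full_at_of_nontrivial Uw).
by rewrite /w /pmul /pinv /const_on asboolT // asboolF // mulg1 invg_eq1.
Qed.

Definition onto_full_coords : Prop :=
  forall g : I -> gT, exists f, U f /\ forall i, full_at i -> f i = g i.

Lemma const_on_mem_of_onto A s :
  onto_full_coords -> (forall i, A i -> full_at i) -> U (const_on A s).
Proof.
move=> onto Afull.
suff : [~: [set: gT], [set: gT]] \subset const_on_mem A.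
  rewrite simple_nonabelian_perfect // => /subsetP /(_ s (in_setT s)).
  by rewrite inE => /asboolP.
rewrite gen_subG; apply/subsetP => _ /imset2P [x y _ _ ->]; rewrite inE; apply/asboolP.
have [f [Uf fA]] := onto (const_on A x).
pose c := const_on A y.
suff -> : const_on A [~ x, y] = pmul (pinv f) (pmul (pinv c) (pmul f c)).
  exact: mem_pmul (mem_pinv Uf) (mem_pconj _ Uf).
apply: funext => i; rewrite /pmul /pinv /c /const_on; case: ifP => [/asboolP Ai|_].
  by rewrite (fA i (Afull i Ai)) /const_on asboolT // commgEl conjgE.
by rewrite invg1 mul1g mulg1 mulVg.
Qed.

Lemma prod_open_of_onto : onto_full_coords -> finite_index U -> prod_open U.
Proof.
move=> onto /finite_nonfull [J nfJ] f Uf; exists J => g gJ.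
have Ufg : U (pmul (pinv f) g).
  apply: (mem_of_support (P := fun i => ~ List.In i J)).
    move=> A s AJ; apply: const_on_mem_of_onto => // i /AJ niJ.
    by apply: contrapT => /nfJ.
  by move=> i /contrapT /gJ gi; rewrite /pmul /pinv gi mulVg.
suff -> : g = pmul f (pmul (pinv f) g) by exact: mem_pmul.
by apply: funext => i; rewrite /pmul /pinv mulKVg.
Qed.

Section ProfiniteTopology.
Variable O : ((I -> gT) -> Prop) -> Prop.
Hypotheses (topO : is_topology_on U O) (mulc : mul_continuous U (@pmul gT I) O).
Hypotheses (comp : compact_on U O) (haus : hausdorff_on U O).

Lemma open_coord_neq g i : full_at i -> O (fun f => U f /\ f i <> g i).
Proof.
move=> fi; apply: (open_of_locally_open topO) => f [Uf ne].
have [t nt] : exists t, [~ (g i)^-1 * f i, t] != 1.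
  apply: (exists_noncommuting simS nabS).
  by rewrite -eq_mulVg1 eq_sym; apply/eqP.
pose y := g i * t * (g i)^-1.
exists (fun h => U h /\ pmul h (const_on (eq^~ i) t) <> pmul (const_on (eq^~ i) y) h).
split.
- by apply: open_mul_neq => //; exact: mem_pmul.
- split=> // /(congr1 (fun h => h i)); rewrite /pmul /const_on asboolT // => fty.
  suff /commgP : commute ((g i)^-1 * f i) t by rewrite (negbTE nt).
  by rewrite /commute -mulgA fty /y !mulgA mulVg mul1g.
- move=> h [Uh nh]; split=> // hi; apply: nh; apply: funext => j.
  rewrite /pmul /const_on; case: ifP => [/asboolP ->|_]; last by rewrite mulg1 mul1g.
  by rewrite hi /y mulgKV.
Qed.

Lemma onto_full_coords_of_compact : onto_full_coords.
Proof.
move=> g; apply: contrapT => nof.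
pose A i := if `[< full_at i >] then (fun f => U f /\ f i <> g i) else (fun _ => False).
case: (compact_on_indexed (A := A) comp) => [i|f Uf|l lcover].
- rewrite /A; case: ifP => [/asboolP|_]; first exact: open_coord_neq.
  by case: topO.
- apply: contrapT => none; apply: nof; exists f; split=> // i fi.
  by apply: contrapT => ne; apply: none; exists i; rewrite /A asboolT.
- have [f [Uf fl]] := approx_on_full g l.
  have [i [il]] := lcover f Uf; rewrite /A; case: ifP => [/asboolP fi [_]|//].
  by apply; apply: fl.
Qed.

End ProfiniteTopology.

End NormalSubgroup.

Theorem mainTheorem10 (gT : finGroupType) (I : Type) :
  simple [set: gT] -> ~~ abelian [set: gT] -> infinite_type I ->
  ~ strongly_complete_prod gT I /\
  (forall U : (I -> gT) -> Prop, normal_subgroup U -> finite_index U ->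
     prod_open U \/ ~ profinite_type U).
Proof.
move=> simS nabS infI; split.
  exact: not_strongly_complete_prod (nonabelian_nontrivial nabS) infI.
move=> U NU Ufin; case: (pselect (profinite_type U)) => [[O]|]; last by right.
case=> topO mulc _ comp [haus _]; left.
exact: prod_open_of_onto (onto_full_coords_of_compact NU simS nabS topO mulc comp haus) Ufin.
Qed.
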